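(* Let $d\ge 2$ and let $\mathcal D\subseteq\mathbb S_1^{d-1}$ have non-empty interior. Then for every $M\in G$ and $t\in(0,1)$ the set $\mathcal Q_{\mathcal D}(M,t)$ is non-empty and the minimum defining $F_{\mathcal D}(M,t)$ exists and is positive; moreover $F_{\mathcal D}(\gamma M,t)=F_{\mathcal D}(M,t)$ for all $\gamma\in\Gamma$. Hence $F_{\mathcal D}$ is a well-defined function $\Gamma\backslash G\times(0,1)\to\mathbb R_{>0}$.
   Context: $G=\mathrm{SL}(d+1,\mathbb R)$, $\Gamma=\mathrm{SL}(d+1,\mathbb Z)$. Elements of $\mathbb R^{d+1}$ are row vectors $(u,\vec v)$, $u\in\mathbb R$, $\vec v\in\mathbb R^d$; $\mathbb Z^{d+1}M=\{\vec mM:\vec m\in\mathbb Z^{d+1}\}$. For $t\in(0,1)$, $\mathcal Q_{\mathcal D}(M,t)=\{(u,\vec v)\in\mathbb Z^{d+1}M : -t<u<1-t,\ \vec v\in\mathbb R_{>0}\mathcal D\}$ and $F_{\mathcal D}(M,t)=\min\{|\vec v| : (u,\vec v)\in\mathcal Q_{\mathcal D}(M,t)\}$ (Euclidean norm). *)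

From HB Require Import structures.
From mathcomp Require Import all_boot all_order all_algebra.
From mathcomp Require Import boolp classical_sets reals.
Set Implicit Arguments. Unset Strict Implicit. Unset Printing Implicit Defensive.
Import Order.TTheory GRing.Theory Num.Theory.
Local Open Scope ring_scope.
Local Open Scope classical_set_scope.

Section Defs.
Variable R : realType.
Variable d : nat.

Definition enorm (v : 'rV[R]_d) : R := Num.sqrt (\sum_(i < d) v ord0 i ^+ 2).

Definition sphere : set 'rV[R]_d := [set v | enorm v = 1].

Definition has_nonempty_interior_in_sphere (D : set 'rV[R]_d) : Prop :=
  exists2 x, D x & exists2 e : R, 0 < e &
    forall y, sphere y -> enorm (y - x) < e -> D y.

Definition pos_cone (D : set 'rV[R]_d) : set 'rV[R]_d :=
  [set v | exists r : R, 0 < r /\ exists2 w, D w & v = r *: w].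

Definition ucomp (x : 'rV[R]_(1 + d)) : R := lsubmx x ord0 ord0.
Definition vcomp (x : 'rV[R]_(1 + d)) : 'rV[R]_d := rsubmx x.

Definition lattice (M : 'M[R]_(1 + d)) : set 'rV[R]_(1 + d) :=
  [set x | exists m : 'rV[int]_(1 + d), x = map_mx intr m *m M].

Definition QD (D : set 'rV[R]_d) (M : 'M[R]_(1 + d)) (t : R) : set 'rV[R]_(1 + d) :=
  [set x | lattice M x /\ - t < ucomp x < 1 - t /\ pos_cone D (vcomp x)].

(* F_D(M,t) = min { |v| : (u,v) in Q_D(M,t) }, defined as the infimum
   (the theorem asserts that the infimum is attained, i.e. is a minimum). *)
Definition FD (D : set 'rV[R]_d) (M : 'M[R]_(1 + d)) (t : R) : R :=
  inf [set enorm (vcomp x) | x in QD D M t].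

End Defs.

From HB Require Import structures.
From mathcomp Require Import all_boot all_order all_algebra.
From mathcomp Require Import boolp classical_sets reals.
From mathcomp Require Import ring lra zify.
Import Order.TTheory GRing.Theory Num.Theory.
Set Implicit Arguments. Unset Strict Implicit.
Local Open Scope ring_scope.
Local Open Scope classical_set_scope.

(* Non-emptiness is a Dirichlet-type pigeonhole argument. Fix a direction x0
   interior to D with x0_k <> 0. Among integer vectors in a large box, two have
   images under d linear forms that agree up to eta; their difference m <> 0
   gives a lattice point x = mM whose first coordinate u is tiny and whose
   2 x 2 minors v_j x0_k - v_k x0_j against x0 are tiny. Discreteness of the
   lattice keeps x away from 0, hence v = λ x0 + (small), λ <> 0; replacing x
   by -x makes λ > 0, and v then lies in the cone over D. The minimum exists
   because only finitely many lattice points have norm below that of a given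
   point of Q_D(M,t), and Γ-invariance holds because γM spans the same lattice. *)

Section EuclideanSpace.
Variables (R : realType) (d : nat).
Implicit Types (u v w x : 'rV[R]_d) (D : set 'rV[R]_d).

Definition dotr u v : R := \sum_(j < d) u ord0 j * v ord0 j.

Lemma dotrC u v : dotr u v = dotr v u.
Proof. by apply: eq_bigr => j _; rewrite mulrC. Qed.

Lemma dotrDl u v w : dotr (u + v) w = dotr u w + dotr v w.
Proof. by rewrite /dotr -big_split; apply: eq_bigr => j _; rewrite mxE mulrDl. Qed.

Lemma dotrDr u v w : dotr u (v + w) = dotr u v + dotr u w.
Proof. by rewrite !(dotrC u) dotrDl. Qed.

Lemma dotrZl (r : R) u v : dotr (r *: u) v = r * dotr u v.
Proof. by rewrite /dotr mulr_sumr; apply: eq_bigr => j _; rewrite mxE mulrA. Qed.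

Lemma dotrBB u v : dotr (u - v) (u - v) = dotr u u + dotr v v - 2 * dotr u v.
Proof.
rewrite /dotr mulr_sumr -big_split -sumrB /=.
by apply: eq_bigr => j _; rewrite !mxE; ring.
Qed.

Lemma dotrr_ge0 v : 0 <= dotr v v.
Proof. by apply: sumr_ge0 => j _; rewrite -expr2 sqr_ge0. Qed.

Lemma enorm_sqE v : enorm v ^+ 2 = dotr v v.
Proof.
have -> : dotr v v = \sum_(j < d) v ord0 j ^+ 2 by apply: eq_bigr => j _; rewrite expr2.
by rewrite sqr_sqrtr // sumr_ge0 // => j _; rewrite sqr_ge0.
Qed.

Lemma enorm_ge0 v : 0 <= enorm v.
Proof. exact: sqrtr_ge0. Qed.

Lemma coord_le_enorm v j : `|v ord0 j| <= enorm v.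
Proof.
rewrite -sqrtr_sqr /enorm ler_sqrt ?sumr_ge0 // => [|i _]; last by rewrite sqr_ge0.
by rewrite (bigD1 j) //= lerDl sumr_ge0 // => i _; rewrite sqr_ge0.
Qed.

Lemma enormZ (r : R) v : enorm (r *: v) = `|r| * enorm v.
Proof.
rewrite /enorm -sqrtr_sqr -sqrtrM ?sqr_ge0 // mulr_sumr.
by congr Num.sqrt; apply: eq_bigr => j _; rewrite mxE exprMn.
Qed.

Lemma sphere_dotrr x : sphere x -> dotr x x = 1.
Proof. by rewrite /sphere /= -enorm_sqE => ->; rewrite expr1n. Qed.

Lemma sphere_coord_neq0 x : sphere x -> exists k, x ord0 k != 0.
Proof.
move=> sx; apply: contrapT => /forallNP x_eq0; move: (sphere_dotrr sx).
rewrite /dotr big1 => [/esym/eqP|j _]; first by rewrite oner_eq0.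
by move/negP/negbNE/eqP: (x_eq0 j) => ->; rewrite mul0r.
Qed.

Lemma sphere_coord_le1 x j : sphere x -> `|x ord0 j| <= 1.
Proof. by move=> sx; rewrite -sx coord_le_enorm. Qed.

Lemma dotr_le_coord u w (c b : R) :
  (forall j, `|u ord0 j| <= c) -> (forall j, `|w ord0 j| <= b) ->
  `|dotr u w| <= d%:R * (c * b).
Proof.
move=> uc wb; apply: (le_trans (ler_norm_sum _ _ _)).
rewrite mulr_natl -[d in _ *+ d]card_ord -sumr_const; apply: ler_sum => j _.
by rewrite normrM ler_pM.
Qed.

Lemma pos_coneZ D (r : R) v : 0 < r -> pos_cone D v -> pos_cone D (r *: v).
Proof.
by move=> r0 [s [s0 [w Dw ->]]]; exists (r * s); split; [exact: mulr_gt0 | exists w; rewrite ?scalerA].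
Qed.

Lemma pos_cone_enorm_gt0 D v : D `<=` sphere (d:=d) -> pos_cone D v -> 0 < enorm v.
Proof. by move=> DS [r [r0 [w Dw ->]]]; rewrite enormZ (DS _ Dw) mulr1 gtr0_norm. Qed.

Section ConeNearRay.
Variables (D : set 'rV[R]_d) (x0 : 'rV[R]_d) (e : R).
Hypotheses (sx0 : sphere x0) (e_gt0 : 0 < e)
  (De : forall y, sphere y -> enorm (y - x0) < e -> D y).

(* [2 - 2 <v, x0> / |v|] is the squared distance from [v / |v|] to [x0]. *)
Lemma pos_cone_of_dotr v :
  0 < enorm v -> 2 - 2 * (dotr v x0 / enorm v) < e ^+ 2 -> pos_cone D v.
Proof.
move=> n_gt0 hdot; set n := enorm v; set w := n^-1 *: v.
have sw : sphere w by rewrite /sphere /= enormZ normfV gtr0_norm // mulVf ?gt_eqF.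
have dist : enorm (w - x0) ^+ 2 < e ^+ 2.
  rewrite enorm_sqE dotrBB sphere_dotrr // (sphere_dotrr sx0) dotrZl.
  by rewrite mulrC -/n; lra.
exists n; split => //; exists w.
  by apply: De => //; rewrite -(ltr_pXn2r (_ : 0 < 2)%N) ?nnegrE ?enorm_ge0 ?ltW.
by rewrite /w scalerA divff ?scale1r // gt_eqF.
Qed.

Lemma pos_cone_of_small_error err (tau : R) :
  0 < tau -> 8 * tau <= Num.min (e ^+ 2) 1 ->
  `|dotr err x0| <= tau -> dotr err err <= tau ^+ 2 -> pos_cone D (x0 + err).
Proof.
move=> tau_gt0; rewrite le_min ler_norml => /andP [tau_e tau_1] /andP [s_lo s_hi] ee_le.
have ee_ge0 := dotrr_ge0 err.
have dotv : dotr (x0 + err) x0 = 1 + dotr err x0 by rewrite dotrDl (sphere_dotrr sx0).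
have nv : enorm (x0 + err) ^+ 2 = 1 + 2 * dotr err x0 + dotr err err.
  by rewrite enorm_sqE dotrDl !dotrDr (sphere_dotrr sx0) (dotrC x0 err); ring.
have n_gt0 : 0 < enorm (x0 + err).
  rewrite -(ltr_pXn2r (_ : 0 < 2)%N) ?nnegrE ?enorm_ge0 // expr0n /= nv; lra.
have n_le : enorm (x0 + err) <= 1 + tau.
  rewrite -(ler_pXn2r (_ : 0 < 2)%N) ?nnegrE ?enorm_ge0 //; last by lra.
  by rewrite nv (_ : (1 + tau) ^+ 2 = 1 + 2 * tau + tau ^+ 2); [lra | ring].
apply: pos_cone_of_dotr => //.
have : (1 + tau) * (1 - 4 * tau) < dotr (x0 + err) x0.
  by rewrite dotv (_ : _ * _ = 1 - 3 * tau - 4 * tau ^+ 2); [nra | ring].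
move/(le_lt_trans (ler_wpM2r _ n_le)); rewrite -ltr_pdivlMl //; lra.
Qed.

Lemma pos_cone_near_x0 :
  exists2 kappa : R, 0 < kappa &
    forall v, (forall j, `|v ord0 j - x0 ord0 j| <= kappa) -> pos_cone D v.
Proof.
have [k _] := sphere_coord_neq0 sx0.
have d_pos : (0 : R) < d%:R by rewrite ltr0n; case: d k => [[]|].
set tau := Num.min (e ^+ 2) 1 / 8.
have tau_gt0 : 0 < tau.
  by rewrite divr_gt0 // lt_min ltr01 andbT exprn_gt0.
exists (tau / d%:R); first exact: divr_gt0.
move=> v near; have err_le j : `|(v - x0) ord0 j| <= tau / d%:R by rewrite !mxE; exact: near.
have dtau : d%:R * (tau / d%:R) = tau by rewrite mulrC divfK ?gt_eqF.
rewrite -(subrK x0 v) addrC; apply: (pos_cone_of_small_error tau_gt0); first by rewrite /tau; lra.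
  rewrite -dtau -[X in _ <= X]mulr1 -mulrA.
  by apply: dotr_le_coord => // j; exact: sphere_coord_le1.
apply: le_trans (ler_norm _) _; apply: le_trans (dotr_le_coord err_le err_le) _.
rewrite mulrA dtau expr2 ler_pM2l // ler_pdivrMr // -{1}[tau]mulr1 ler_pM2l //.
by rewrite ler1n -(ltr0n R).
Qed.

Lemma pos_cone_near_ray : exists2 kappa : R, 0 < kappa &
  forall (lam : R) v, 0 < lam ->
    (forall j, `|v ord0 j - lam * x0 ord0 j| <= kappa * lam) -> pos_cone D v.
Proof.
have [kappa kappa_gt0 near_x0] := pos_cone_near_x0; exists kappa => // lam v lam_gt0 near.
have -> : v = lam *: (lam^-1 *: v) by rewrite scalerA divff ?gt_eqF ?scale1r.
apply: pos_coneZ => //; apply: near_x0 => j; rewrite mxE.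
rewrite (_ : _ - _ = (v ord0 j - lam * x0 ord0 j) / lam); last by field; rewrite gt_eqF.
by rewrite normrM normfV (gtr0_norm lam_gt0) ler_pdivrMr.
Qed.

End ConeNearRay.
End EuclideanSpace.

Lemma int_box_finite (n N : nat) :
  exists s : seq 'rV[int]_n, forall m : 'rV[int]_n, (forall i, `|m ord0 i| <= N%:Z) -> m \in s.
Proof.
pose box (f : {ffun 'I_n -> 'I_(N + N).+1}) : 'rV[int]_n := \row_i ((f i : nat)%:Z - N%:Z).
exists [seq box f | f <- enum {ffun 'I_n -> 'I_(N + N).+1}] => m mN.
have -> : m = box [ffun i => inord (absz (m ord0 i + N%:Z))].
  apply/matrixP => a i; rewrite (fintype.ord1 a) !mxE ffunE inordK; have := mN i; lia.
by apply: map_f; rewrite mem_enum.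
Qed.

Section IntegerLattice.
Variables (R : realType) (n : nat) (M : 'M[R]_n).
Hypothesis M_unit : M \in unitmx.

Lemma lattice_coordE (m : 'rV[int]_n) l :
  (map_mx intr m *m M) ord0 l = \sum_(i < n) (m ord0 i)%:~R * M i l.
Proof. by rewrite mxE; apply: eq_bigr => i _; rewrite mxE. Qed.

Lemma lattice_coord_bound : exists2 C : R, 0 <= C &
  forall (m : 'rV[int]_n) (X : R), (forall l, `|(map_mx intr m *m M) ord0 l| <= X) ->
    forall i, `|(m ord0 i)%:~R : R| <= X * C.
Proof.
exists (\sum_l \sum_i `|invmx M l i|).
  by apply: sumr_ge0 => l _; apply: sumr_ge0 => i _; exact: normr_ge0.
move=> m X mX i; have X0 : 0 <= X := le_trans (normr_ge0 _) (mX i).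
have -> : (m ord0 i)%:~R = (map_mx intr m *m M *m invmx M) ord0 i.
  by rewrite mulmxK // mxE.
rewrite mxE mulr_sumr.
apply: (le_trans (ler_norm_sum _ _ _)); apply: ler_sum => l _.
rewrite normrM; apply: ler_pM => //.
by rewrite (bigD1 i) //= lerDl; apply: sumr_ge0 => j _; exact: normr_ge0.
Qed.

Lemma lattice_discrete : exists2 mu : R, 0 < mu &
  forall m : 'rV[int]_n, m != 0 -> exists l, mu <= `|(map_mx intr m *m M) ord0 l|.
Proof.
have [C C0 hC] := lattice_coord_bound; exists (C + 1)^-1; first by rewrite invr_gt0; lra.
move=> m; apply: contra_neqP => small; apply/matrixP => a i; rewrite (fintype.ord1 a) mxE.
have mX l : `|(map_mx intr m *m M) ord0 l| <= (C + 1)^-1.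
  by apply/ltW; rewrite ltNge; apply/negP => h; apply: small; exists l.
have : `|(m ord0 i)%:~R : R| < 1.
  apply: le_lt_trans (hC _ _ mX i) _.
  by rewrite ltr_pdivrMl ?mulr1; lra.
rewrite -intr_norm -[1 : R]/(1%:~R) ltr_int => lt1.
have : `|m ord0 i| == 0 by lia.
by rewrite normr_eq0 => /eqP.
Qed.

Lemma lattice_bounded_finite (X : R) : exists s : seq 'rV[R]_n,
  forall m : 'rV[int]_n, (forall l, `|(map_mx intr m *m M) ord0 l| <= X) ->
    map_mx intr m *m M \in s.
Proof.
have [C C0 hC] := lattice_coord_bound.
have [s hs] := int_box_finite n (Num.truncn (X * C)).
exists [seq map_mx intr m *m M | m <- s] => m mX; apply: map_f; apply: hs => i.
have X0 : 0 <= X := le_trans (normr_ge0 _) (mX i).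
have := hC _ _ mX i; rewrite -intr_norm -abszE => hm.
have : (`|m ord0 i|%N <= Num.truncn (X * C))%N by rewrite truncn_ge_nat ?mulr_ge0.
lia.
Qed.

End IntegerLattice.

Lemma finite_sublevel_argmin (R : realType) (T : eqType) (P : T -> Prop)
    (F : T -> R) (s : seq T) (x1 : T) :
  P x1 -> (forall y, P y -> F y <= F x1 -> y \in s) ->
  exists2 x, P x & forall y, P y -> F x <= F y.
Proof.
move=> Px1 hs; pose at_ (i : 'I_(size s)) := nth x1 s i.
have at_index y : y \in s -> exists i, at_ i = y.
  by rewrite -index_mem => ys; exists (Ordinal ys); rewrite /at_ nth_index // -index_mem.
have [i1 i1E] := at_index x1 (hs x1 Px1 (lexx _)).
pose Pat i := `[< P (at_ i) >].
have Pi1 : Pat i1 by rewrite /Pat i1E; apply/asboolP.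
case: (arg_minP (F \o at_) Pi1) => i /asboolP Pi imin.
exists (at_ i) => // y Py; have [le_y|lt_y] := leP (F y) (F x1).
  have [j jE] := at_index y (hs y Py le_y).
  by rewrite -jE; apply: (imin j); rewrite /Pat jE; apply/asboolP.
by apply: le_trans (ltW lt_y); rewrite -i1E; apply: (imin i1 Pi1).
Qed.

Section Dirichlet.
Variable R : realType.

Lemma truncn_div_eq_dist_lt (a b eta : R) : 0 <= a -> 0 <= b -> 0 < eta ->
  Num.truncn (a / eta) = Num.truncn (b / eta) -> `|a - b| < eta.
Proof.
move=> a0 b0 eta0 eq_ab.
have /andP [a1 a2] := truncn_itv (divr_ge0 a0 (ltW eta0)).
have /andP [b1 b2] := truncn_itv (divr_ge0 b0 (ltW eta0)).
move: a1 a2; rewrite eq_ab -addn1 natrD => a1 a2.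
have : `|a / eta - b / eta| < 1 by rewrite ltr_norml; apply/andP; split; lra.
by rewrite -mulrBl normrM normfV (gtr0_norm eta0) ltr_pdivrMr // mul1r.
Qed.

Lemma pigeonhole_close_pair (T : finType) (q : nat) (phi : T -> 'I_q -> R) (B eta : R) :
  0 < eta -> (forall f j, `|phi f j| <= B) ->
  ((Num.truncn (2 * B / eta)).+1 ^ q < #|T|)%N ->
  exists f1 f2, f1 != f2 /\ forall j, `|phi f1 j - phi f2 j| < eta.
Proof.
move=> eta0 phiB card_T; set K := Num.truncn (2 * B / eta).
pose cell f j := Num.truncn ((phi f j + B) / eta).
have cell_ge0 f j : 0 <= phi f j + B.
  by have := phiB f j; rewrite ler_norml => /andP [? _]; lra.
have cell_le f j : (cell f j <= K)%N.
  apply: le_truncn; apply: ler_wpM2r; first by rewrite invr_ge0 ltW.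
  by have := phiB f j; rewrite ler_norml => /andP [_ ?]; lra.
pose g f : {ffun 'I_q -> 'I_K.+1} := [ffun j => inord (cell f j)].
have /injectivePn [f1 [f2 ne12 g12]] : ~~ injectiveb g.
  apply/injectiveP => g_inj; have := leq_card g g_inj.
  by rewrite card_ffun !card_ord leqNgt card_T.
exists f1, f2; split => // j.
have -> : phi f1 j - phi f2 j = (phi f1 j + B) - (phi f2 j + B) by ring.
apply: truncn_div_eq_dist_lt => //.
have := congr1 (fun h : {ffun 'I_q -> 'I_K.+1} => (h j : nat)) g12.
by rewrite !ffunE /= !inordK ?ltnS ?cell_le //; apply.
Qed.

Lemma pigeonhole_box_size (p q : nat) (A eta : R) : (q < p)%N -> 0 <= A -> 0 < eta ->
  exists N : nat, ((Num.truncn (2 * (N%:R * A) / eta)).+1 ^ q < N ^ p)%N.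
Proof.
(* [N = trunc (P ^+ q) + 1] works: the left-hand side is at most [(N P) ^+ q < N ^+ q.+1]. *)
move=> qp A0 eta0; set P := 2 * A / eta + 1.
have P0 : 0 <= P by rewrite /P addr_ge0 // divr_ge0 ?mulr_ge0 // ltW.
pose N := (Num.truncn (P ^+ q)).+1; exists N.
have N1 : (1 : R) <= N%:R by rewrite ler1n.
have K_le : (Num.truncn (2 * (N%:R * A) / eta)).+1%:R <= N%:R * P :> R.
  have hK : (Num.truncn (2 * (N%:R * A) / eta))%:R <= 2 * (N%:R * A) / eta.
    by rewrite truncn_le divr_ge0 ?mulr_ge0 // ltW.
  rewrite -addn1 natrD /P mulrDr mulr1 lerD //.
  by rewrite (_ : N%:R * (2 * A / eta) = 2 * (N%:R * A) / eta) //; ring.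
have PN : P ^+ q < N%:R by have /andP [_] := truncn_itv (exprn_ge0 q P0).
rewrite -(ltr_nat R) !natrX.
apply: (le_lt_trans (lerXn2r q _ _ K_le)); rewrite ?nnegrE ?mulr_ge0 //.
rewrite exprMn; apply: (@lt_le_trans _ _ (N%:R ^+ q * N%:R)).
  by rewrite ltr_pM2l // exprn_gt0 // ltr0n.
by rewrite -exprSr -!natrX ler_nat leq_pexp2l.
Qed.

Lemma dirichlet_small_forms (p q : nat) (a : 'I_p -> 'I_q -> R) (eta : R) :
  (q < p)%N -> 0 < eta ->
  exists2 m : 'rV[int]_p, m != 0 &
    forall j, `|\sum_(i < p) (m ord0 i)%:~R * a i j| < eta.
Proof.
move=> qp eta0; set A := \sum_(i < p) \sum_(j < q) `|a i j|.
have A0 : 0 <= A by do 2!(apply: sumr_ge0 => ? _); exact: normr_ge0.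
have [N card_box] := pigeonhole_box_size qp A0 eta0.
pose phi (f : {ffun 'I_p -> 'I_N}) j := \sum_(i < p) (f i : nat)%:R * a i j.
have phiB f j : `|phi f j| <= N%:R * A.
  apply: le_trans (ler_norm_sum _ _ _) _; rewrite mulr_sumr; apply: ler_sum => i _.
  rewrite normrM ger0_norm // ler_pM ?ler_nat 1?ltnW //.
  by rewrite (bigD1 j) //= lerDl sumr_ge0 // => ? _.
have card_T : ((Num.truncn (2 * (N%:R * A) / eta)).+1 ^ q < #|{ffun 'I_p -> 'I_N}|)%N.
  by rewrite card_ffun !card_ord.
have [f1 [f2 [ne12 close12]]] := pigeonhole_close_pair eta0 phiB card_T.
exists (\row_i ((f1 i : nat)%:Z - (f2 i : nat)%:Z)).
  apply: contra ne12 => /eqP m0; apply/eqP/ffunP => i; apply: val_inj => /=.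
  have := congr1 (fun m : 'rV[int]_p => m ord0 i) m0; rewrite !mxE /= => h.
  by apply/eqP; rewrite -(eqr_nat int); apply/eqP; lia.
move=> j; rewrite (_ : \sum_(i < p) _ = phi f1 j - phi f2 j) //.
by rewrite /phi -sumrB; apply: eq_bigr => i _; rewrite mxE rmorphB /= -!pmulrn mulrBl.
Qed.

End Dirichlet.

Section LatticeNearRay.
Variables (R : realType) (d : nat).

Lemma ucompE (x : 'rV[R]_(1 + d)) : ucomp x = x ord0 (lshift d ord0).
Proof. by rewrite /ucomp mxE. Qed.

Lemma vcompE (x : 'rV[R]_(1 + d)) j : vcomp x ord0 j = x ord0 (rshift 1 j).
Proof. by rewrite /vcomp mxE. Qed.

Lemma near_ray_of_small_minors (v x0 : 'rV[R]_d) (k j0 : 'I_d) (mu kappa : R) :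
  0 < mu -> 0 < kappa -> (forall j, `|x0 ord0 j| <= 1) -> x0 ord0 k != 0 ->
  mu <= `|v ord0 j0| ->
  (forall j, `|v ord0 j * x0 ord0 k - v ord0 k * x0 ord0 j|
               <= `|x0 ord0 k| * mu * Num.min kappa 1 / 2) ->
  exists2 lam : R, lam != 0 & forall j, `|v ord0 j - lam * x0 ord0 j| <= kappa * `|lam|.
Proof.
move=> mu0 kappa0 x0_le1 xk0 v_j0 cross; set al := `|x0 ord0 k|; set c := Num.min kappa 1.
have al0 : 0 < al by rewrite normr_gt0.
have c0 : 0 < c by rewrite lt_min kappa0 ltr01.
have c1 : c <= 1 by rewrite ge_min lexx orbT.
have ck : c <= kappa by rewrite ge_min lexx.
have vk : mu / 2 <= `|v ord0 k| / al.
  have h : `|v ord0 j0 * x0 ord0 k| <= al * mu * c / 2 + `|v ord0 k|.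
    rewrite (_ : v ord0 j0 * _ = (v ord0 j0 * x0 ord0 k - v ord0 k * x0 ord0 j0)
                                 + v ord0 k * x0 ord0 j0); last by ring.
    apply: le_trans (ler_normD _ _) _; apply: lerD (cross j0) _.
    by rewrite normrM; apply: ler_piMr.
  rewrite normrM -/al in h; rewrite ler_pdivlMr //.
  have : mu * al <= `|v ord0 j0| * al by rewrite ler_pM2r.
  have : al * mu * c <= al * mu by apply: ler_piMr => //; rewrite mulr_ge0 ?ltW.
  lra.
exists (v ord0 k / x0 ord0 k).
  by rewrite -normr_gt0 normrM normfV -/al; apply: lt_le_trans vk; lra.
move=> j; rewrite normrM normfV -/al.
rewrite (_ : v ord0 j - _ = (v ord0 j * x0 ord0 k - v ord0 k * x0 ord0 j) / x0 ord0 k);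
  last by field.
rewrite normrM normfV -/al ler_pdivrMr //; apply: le_trans (cross j) _.
have h : c * (mu / 2) <= kappa * (`|v ord0 k| / al).
  by apply: ler_pM => //; [exact: ltW | rewrite divr_ge0 ?ltW].
by rewrite -/al -/c (_ : al * mu * c / 2 = c * (mu / 2) * al) ?ler_pM2r //; ring.
Qed.

Lemma lattice_small_minors (M : 'M[R]_(1 + d)) (x0 : 'rV[R]_d) (k : 'I_d) (eta : R) :
  0 < eta ->
  exists2 m : 'rV[int]_(1 + d), m != 0 &
    let x := map_mx intr m *m M in
    `|ucomp x| < eta /\
    forall j, `|vcomp x ord0 j * x0 ord0 k - vcomp x ord0 k * x0 ord0 j| < eta.
Proof.
move=> eta_gt0.
pose a i j := if j == k then M i (lshift d ord0)
              else M i (rshift 1 j) * x0 ord0 k - M i (rshift 1 k) * x0 ord0 j.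
have [m m_neq0 small] := dirichlet_small_forms a (ltnSn d) eta_gt0.
exists m => //; split.
  rewrite ucompE lattice_coordE (_ : \sum_i _ = \sum_i (m ord0 i)%:~R * a i k) ?small //.
  by apply: eq_bigr => i _; rewrite /a eqxx.
move=> j; have [->|njk] := eqVneq j k; first by rewrite subrr normr0.
rewrite !vcompE !lattice_coordE !mulr_suml -sumrB.
rewrite (_ : \sum_i _ = \sum_i (m ord0 i)%:~R * a i j) ?small //.
by apply: eq_bigr => i _; rewrite /a (negbTE njk) mulrBr !mulrA.
Qed.

Lemma lattice_near_line (M : 'M[R]_(1 + d)) (x0 : 'rV[R]_d) (eta kappa : R) :
  M \in unitmx -> sphere x0 -> 0 < eta -> 0 < kappa ->
  exists y, [/\ lattice M y, `|ucomp y| < eta &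
    exists2 lam, lam != 0 &
      forall j, `|vcomp y ord0 j - lam * x0 ord0 j| <= kappa * `|lam|].
Proof.
move=> M_unit sx0 eta_gt0 kappa_gt0.
have [k xk_neq0] := sphere_coord_neq0 sx0.
have [mu mu_gt0 discrete] := lattice_discrete M_unit.
set delta := `|x0 ord0 k| * mu * Num.min kappa 1 / 2.
have delta_lt_mu : delta < mu.
  have c_ge0 : 0 <= Num.min kappa 1 by rewrite le_min (ltW kappa_gt0) ler01.
  have c1 : Num.min kappa 1 <= 1 by rewrite ge_min lexx orbT.
  have : `|x0 ord0 k| * Num.min kappa 1 <= 1 * 1.
    by apply: ler_pM => //; exact: sphere_coord_le1.
  rewrite mulr1; move/(ler_piMl (ltW mu_gt0)); rewrite /delta mulrAC; lra.
have delta_gt0 : 0 < delta.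
  by rewrite /delta !mulr_gt0 ?normr_gt0 ?lt_min ?kappa_gt0 ?ltr01 ?invr_gt0.
have min_gt0 : 0 < Num.min eta delta by rewrite lt_min eta_gt0.
have min_le : Num.min eta delta <= delta by rewrite ge_min lexx orbT.
have [m m_neq0 [u_small cross]] := lattice_small_minors M x0 k min_gt0.
set x := map_mx intr m *m M in u_small cross.
move: u_small; rewrite lt_min => /andP [u_lt_eta u_lt_delta].
have [j0 v_j0] : exists j0, mu <= `|vcomp x ord0 j0|.
  have [l] := discrete m m_neq0; rewrite -/x -(splitK l); case: (split l) => [l0|j] /=.
    rewrite (fintype.ord1 l0) -ucompE => u_big; move: u_lt_delta.
    by rewrite ltNge (le_trans (ltW delta_lt_mu) u_big).
  by rewrite -vcompE; exists j.
exists x; split => //; first by exists m.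
apply: near_ray_of_small_minors mu_gt0 kappa_gt0 (fun j => sphere_coord_le1 j sx0) xk_neq0 v_j0 _.
by move=> j; exact: ltW (lt_le_trans (cross j) min_le).
Qed.

Lemma lattice_near_ray (M : 'M[R]_(1 + d)) (x0 : 'rV[R]_d) (eta kappa : R) :
  M \in unitmx -> sphere x0 -> 0 < eta -> 0 < kappa ->
  exists y, [/\ lattice M y, `|ucomp y| < eta &
    exists2 lam, 0 < lam & forall j, `|vcomp y ord0 j - lam * x0 ord0 j| <= kappa * lam].
Proof.
move=> M_unit sx0 eta_gt0 kappa_gt0.
have [x [[m x_eq] u_small [lam lam_neq0 near]]] := lattice_near_line M_unit sx0 eta_gt0 kappa_gt0.
have [lam_gt0|lam_le0] := ltrP 0 lam.
  exists x; split => //; first by exists m.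
  by exists lam => // j; have := near j; rewrite (gtr0_norm lam_gt0).
have lam_lt0 : lam < 0 by rewrite lt_neqAle lam_neq0 lam_le0.
exists (- x); split.
- by exists (- m); rewrite x_eq map_mxN mulNmx.
- by rewrite ucompE mxE normrN -ucompE.
- exists (- lam) => [|j]; first by rewrite oppr_gt0.
  rewrite vcompE mxE -vcompE mulNr opprK addrC -opprB normrN.
  by have := near j; rewrite (ltr0_norm lam_lt0).
Qed.

End LatticeNearRay.

Section QDFacts.
Variables (R : realType) (d : nat) (D : set 'rV[R]_d) (M : 'M[R]_(1 + d)) (t : R).
Hypotheses (M_unit : M \in unitmx) (t01 : 0 < t < 1).

Lemma QD_nonempty :
  D `<=` sphere (d:=d) -> has_nonempty_interior_in_sphere D -> QD D M t !=set0.
Proof.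
move=> DS [x0 Dx0 [e e_gt0 De]]; have sx0 := DS _ Dx0.
have [kappa kappa_gt0 cone] := pos_cone_near_ray sx0 e_gt0 De.
have /andP [t0 t1] := t01; have s_gt0 : 0 < Num.min t (1 - t) by rewrite lt_min t0 subr_gt0.
have [y [ly u_small [lam lam_gt0 near]]] := lattice_near_ray M_unit sx0 s_gt0 kappa_gt0.
exists y; split; [exact: ly | split; last exact: cone lam_gt0 near].
move: u_small; rewrite lt_min => /andP [/ltr_normlP [? _] /ltr_normlP [_ ?]].
by apply/andP; split; lra.
Qed.

Lemma QD_coord_le_enorm y : QD D M t y -> forall l, `|y ord0 l| <= 1 + enorm (vcomp y).
Proof.
case=> _ [u_in _] l; have /andP [t0 t1] := t01; have n_ge0 := enorm_ge0 (vcomp y).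
rewrite -(splitK l); case: (split l) => [l0|j] /=.
  rewrite (fintype.ord1 l0) -ucompE ler_norml; move: u_in => /andP [? ?]; apply/andP; split; lra.
by rewrite -vcompE; apply: le_trans (coord_le_enorm _ _) _; rewrite lerDr.
Qed.

Lemma QD_has_min : QD D M t !=set0 ->
  exists2 x, QD D M t x & forall y, QD D M t y -> enorm (vcomp x) <= enorm (vcomp y).
Proof.
case=> x1 Qx1; have [s s_box] := lattice_bounded_finite M_unit (1 + enorm (vcomp x1)).
apply: (finite_sublevel_argmin (F := fun y => enorm (vcomp y)) (s := s) Qx1) => y Qy y_le.
case: (Qy) => [[m y_eq] _]; rewrite y_eq; apply: s_box => l; rewrite -y_eq.
by apply: le_trans (QD_coord_le_enorm Qy l) _; rewrite lerD2l.
Qed.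

End QDFacts.

Lemma FD_minE (R : realType) (d : nat) (D : set 'rV[R]_d) (M : 'M[R]_(1 + d)) (t : R) x :
  QD D M t x -> (forall y, QD D M t y -> enorm (vcomp x) <= enorm (vcomp y)) ->
  FD D M t = enorm (vcomp x).
Proof.
move=> Qx x_min; apply/eqP; rewrite eq_le; apply/andP; split.
  by apply: ge_inf; [exists (enorm (vcomp x)) => _ [y Qy <-]; exact: x_min | exists x].
by apply: lb_le_inf; [exists (enorm (vcomp x)), x | move=> _ [y Qy <-]; exact: x_min].
Qed.

Lemma lattice_unimodular (R : realType) (d : nat) (M : 'M[R]_(1 + d)) (g : 'M[int]_(1 + d)) :
  \det g = 1 -> lattice (map_mx intr g *m M) = lattice M.
Proof.
move=> det_g; have g_unit : g \in unitmx by rewrite unitmxE det_g unitr1.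
apply/seteqP; split => x [m ->].
  by exists (m *m g); rewrite map_mxM mulmxA.
by exists (m *m invmx g); rewrite mulmxA -map_mxM mulmxKV.
Qed.

Lemma FD_unimodular (R : realType) (d : nat) (D : set 'rV[R]_d) (M : 'M[R]_(1 + d)) (t : R)
    (g : 'M[int]_(1 + d)) :
  \det g = 1 -> FD D (map_mx intr g *m M) t = FD D M t.
Proof. by move=> det_g; rewrite /FD /QD lattice_unimodular. Qed.

Unset Implicit Arguments. Set Strict Implicit.

Theorem proposition2p1 (R : realType) (d : nat) (D : set 'rV[R]_d) :
  (2 <= d)%N ->
  D `<=` sphere (d:=d) ->
  has_nonempty_interior_in_sphere D ->
  forall (M : 'M[R]_(1 + d)) (t : R), \det M = 1 -> 0 < t < 1 ->
    [/\ QD D M t !=set0,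
        (exists2 x, QD D M t x &
           forall y, QD D M t y -> enorm (vcomp x) <= enorm (vcomp y)),
        (exists2 x, QD D M t x & enorm (vcomp x) = FD D M t),
        0 < FD D M t
      & forall gamma : 'M[int]_(1 + d), \det gamma = 1 ->
          FD D (map_mx intr gamma *m M) t = FD D M t].
Proof.
move=> _ DS D_int M t det_M t01.
have M_unit : M \in unitmx by rewrite unitmxE det_M unitr1.
have Q_nonempty := QD_nonempty M_unit t01 DS D_int.
have [x Qx x_min] := QD_has_min M_unit t01 Q_nonempty.
have FD_x := FD_minE Qx x_min.
split => //; [by exists x | by exists x | | exact: FD_unimodular].
by rewrite FD_x; case: Qx => _ [_ /(pos_cone_enorm_gt0 DS)].
Qed.
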